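(* Let $G$ be a non abelian finitely generated group. The following conditions are equivalent: \begin{itemize} \item[(lim)] $G$ is a limit of dihedral groups; \item[(res)] $G$ is fully residually dihedral; \item[(iso)] $G$ is isomorphic to a semidirect product $A \rtimes \mathbb{Z}/2\mathbb{Z}$, where $A$ is a (finitely generated) group which is a limit of cyclic groups, and $\mathbb{Z}/2\mathbb{Z}$ acts on $A$ by multiplication by $-1$ (i.e. by $x\mapsto x^{-1}$); \item[($Th_\forall$)] $Th_{\forall}(G) \supset \bigcap_{n \ge 3} Th_{\forall}(\mathbb{D}_{2n})$; \item[($\Pi/\mathfrak{U}$)] $G$ is isomorphic to a subgroup of the ultraproduct $\left(\prod_{n \ge 3} \mathbb{D}_{2n} \right)/\mathfrak{U}$ for some ultrafilter $\mathfrak{U}$ on $\mathbb{N}$. \end{itemize}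
   Context: For $n\in\{1,2,\dots\}\cup\{\infty\}$, $\mathbb{D}_{2n}=\langle a,b \mid a^2=b^n=1,\ a^{-1}ba=b^{-1}\rangle$ (the relation $b^n=1$ omitted when $n=\infty$); a group is dihedral if it is isomorphic to some $\mathbb{D}_{2n}$. A marked group on $m$ generators is a pair $(G,S)$ with $S=(g_1,\dots,g_m)$ an ordered generating tuple of $G$; two are identified if an isomorphism maps one tuple to the other. Marked groups on $m$ generators correspond to normal subgroups of the free group $\mathbb{F}_m$ (kernels of the epimorphisms $\mathbb{F}_m\to G$ sending the basis to $S$); the space $\mathcal{M}_m$ of such marked groups carries the topology induced from the product topology on $\{0,1\}^{\mathbb{F}_m}$. The space $\mathcal{M}$ of all finitely generated marked groups is the inductive limit of the $\mathcal{M}_m$ under the embeddings $(G,(g_1,\dots,g_m))\mapsto(G,(g_1,\dots,g_m,1))$. A finitely generated group $G$ is a limit of groups with a property $P$ (e.g. dihedral, cyclic) if for some generating tuple $S$ of $G$, $(G,S)$ is the limit in $\mathcal{M}$ of a sequence of marked groups $(G_n,S_n)$ with each $G_n$ having $P$ (this does not depend on the choice of $S$). $G$ is fully residually $P$ if for every finite subset $F\subset G\setminus\{1\}$ there is a group $H$ with $P$ and a homomorphism $G\to H$ mapping no element of $F$ to $1$. A universal sentence is a sentence $\forall x_1\cdots\forall x_k\,\phi(x_1,\dots,x_k)$ in the language of groups (symbols $\cdot,{}^{-1},1,=$, connectives $\wedge,\vee,\neg$) with $\phi$ quantifier free; $Th_\forall(G)$ is the set of universal sentences true in $G$. For an ultrafilter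 $\mathfrak{U}$ on $\mathbb{N}$ (a finitely additive $\{0,1\}$-valued measure on all subsets of $\mathbb{N}$ with total mass 1), the ultraproduct $(\prod_n G_n)/\mathfrak{U}$ is the quotient of $\prod_n G_n$ by the relation of being equal on a set of indices of $\mathfrak{U}$-measure $1$. *)

(* abstract (possibly infinite) groups are given by an
   explicit record with Leibniz equality. *)
From mathcomp Require Import all_boot all_algebra.
From Stdlib Require Import List.

Set Implicit Arguments.
Unset Strict Implicit.
Unset Printing Implicit Defensive.

Import GRing.Theory.
Local Open Scope ring_scope.

Record grp := Grp {
  gcar :> Type;
  gmul : gcar -> gcar -> gcar;
  ginv : gcar -> gcar;
  gone : gcar;
  gmulA : forall x y z, gmul x (gmul y z) = gmul (gmul x y) z;
  gmul1 : forall x, gmul gone x = x;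
  gmulV : forall x, gmul (ginv x) x = gone }.

Arguments gmul {g}.
Arguments ginv {g}.
Arguments gone {g}.

Section GroupFacts.
Variable G : grp.
Implicit Types x y z : G.

Lemma gcancel x y z : gmul x y = gmul x z -> y = z.
Proof.
move=> h.
have: gmul (ginv x) (gmul x y) = gmul (ginv x) (gmul x z) by rewrite h.
by rewrite !gmulA gmulV !gmul1.
Qed.

Lemma gidem (e : G) : gmul e e = e -> e = gone.
Proof.
move=> h.
have: gmul (ginv e) (gmul e e) = gmul (ginv e) e by rewrite h.
by rewrite gmulA gmulV gmul1.
Qed.

Lemma gmulVr x : gmul x (ginv x) = gone.
Proof.
apply: gidem. by rewrite -gmulA (gmulA (ginv x)) gmulV gmul1.
Qed.

Lemma gmulr1 x : gmul x gone = x.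
Proof. by rewrite -(gmulV x) gmulA gmulVr gmul1. Qed.

Lemma ginvK x : ginv (ginv x) = x.
Proof.
apply: (@gcancel (ginv x)). by rewrite gmulVr gmulV.
Qed.

Lemma ginvM x y : ginv (gmul x y) = gmul (ginv y) (ginv x).
Proof.
apply: (@gcancel (gmul x y)). rewrite gmulVr.
by rewrite -gmulA (gmulA y) gmulVr gmul1 gmulVr.
Qed.

End GroupFacts.

Definition hom (G H : grp) (f : G -> H) : Prop :=
  forall x y : G, f (gmul x y) = gmul (f x) (f y).

Definition iso (G H : grp) : Prop :=
  exists f : G -> H, hom f /\ exists g : H -> G, cancel f g /\ cancel g f.

Definition commutative_grp (G : grp) : Prop :=
  forall x y : G, gmul x y = gmul y x.

(** Elements are pairs (a, s), s : bool being
      the element of Z/2Z; (a,s)(b,t) = (a * s.b, s + t). *)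
Section InvSdprod.
Variables (A : grp) (hA : commutative_grp A).

Definition sigma (s : bool) (b : A) : A := if s then ginv b else b.

Definition dmul (p q : A * bool) : A * bool :=
  (gmul p.1 (sigma p.2 q.1), addb p.2 q.2).
Definition dinv (p : A * bool) : A * bool :=
  (if p.2 then p.1 else ginv p.1, p.2).
Definition done_ : A * bool := (gone, false).

Lemma sigmaM s (b c : A) : sigma s (gmul b c) = gmul (sigma s b) (sigma s c).
Proof. case: s => //=. by rewrite ginvM hA. Qed.

Lemma sigma_comp s t (c : A) : sigma s (sigma t c) = sigma (addb s t) c.
Proof. by case: s; case: t => //=; rewrite ginvK. Qed.

Lemma dmulA p q r : dmul p (dmul q r) = dmul (dmul p q) r.
Proof.
case: p q r => [a s] [b t] [c u]; rewrite /dmul /=.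
by rewrite sigmaM sigma_comp gmulA addbA.
Qed.

Lemma dmul1 p : dmul done_ p = p.
Proof. by case: p => a s; rewrite /dmul /= gmul1. Qed.

Lemma dmulV p : dmul (dinv p) p = done_.
Proof.
case: p => a s; rewrite /dmul /dinv /done_ /=.
by case: s => /=; rewrite ?gmulVr ?gmulV.
Qed.

Definition inv_sdprod : grp := Grp dmulA dmul1 dmulV.
End InvSdprod.

Definition zmod_grp (Z : zmodType) : grp :=
  @Grp Z +%R -%R 0 (@addrA Z) (@add0r Z) (@addNr Z).

Definition zdih (Z : zmodType) : grp :=
  inv_sdprod (fun x y : zmod_grp Z => @addrC Z x y).

(** D_{2n} (n >= 1) = Z/nZ >| Z/2Z, i.e. <a,b | a^2 = b^n = 1, a^-1 b a = b^-1>
    (for n >= 1 the type 'I_n.-1.+1 is 'I_n, the integers mod n). *)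
Definition D2 (n : nat) : grp := zdih [the zmodType of 'I_n.-1.+1].

Definition Dinf : grp := zdih int.

Definition dihedral (G : grp) : Prop :=
  (exists n : nat, (1 <= n)%N /\ iso G (D2 n)) \/ iso G Dinf.

(** * Group words (elements of the free group, unreduced) and evaluation *)
Inductive term : Type :=
  | tvar of nat
  | tone
  | tmul of term & term
  | tinv of term.

Fixpoint teval (G : grp) (r : nat -> G) (t : term) : G :=
  match t with
  | tvar i => r i
  | tone => gone
  | tmul t1 t2 => gmul (teval r t1) (teval r t2)
  | tinv t1 => ginv (teval r t1)
  end.

Fixpoint tbound (m : nat) (t : term) : Prop :=
  match t with
  | tvar i => (i < m)%N
  | tone => True
  | tmul t1 t2 => tbound m t1 /\ tbound m t2
  | tinv t1 => tbound m t1
  end.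

Definition generates (G : grp) (m : nat) (S : nat -> G) : Prop :=
  forall x : G, exists t, tbound m t /\ teval S t = x.

Definition fin_gen (G : grp) : Prop := exists m S, @generates G m S.

Definition cyclic (G : grp) : Prop := exists g : G, generates 1 (fun _ => g).

(** * Limits in the space of marked groups.
    (G_k, S_k) -> (G, S) in M_m iff for every word w in F_m,
    eventually (w(S_k) = 1 <-> w(S) = 1). *)
Definition limit_of (P : grp -> Prop) (G : grp) : Prop :=
  exists (m : nat) (S : nat -> G), generates m S /\
  exists (Gs : nat -> grp) (Ss : forall k, nat -> Gs k),
    (forall k, P (Gs k)) /\ (forall k, generates m (Ss k)) /\
    (forall t, tbound m t -> exists N, forall k, (N <= k)%N ->
        (teval (Ss k) t = gone <-> teval S t = gone)).

Definition fully_residually (P : grp -> Prop) (G : grp) : Prop :=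
  forall F : list G, (forall x, In x F -> x <> gone) ->
  exists H : grp, P H /\ exists f : G -> H, hom f /\
    (forall x, In x F -> f x <> gone).

(** A quantifier-free formula phi in the variables
    x_0, x_1, ...; the universal sentence "forall x_0 ... x_k, phi" holds in G
    iff phi holds under every assignment of the variables. *)
Inductive qf : Type :=
  | qeq of term & term
  | qand of qf & qf
  | qor of qf & qf
  | qnot of qf.

Fixpoint qsat (G : grp) (r : nat -> G) (phi : qf) : Prop :=
  match phi with
  | qeq t1 t2 => teval r t1 = teval r t2
  | qand p q => qsat r p /\ qsat r q
  | qor p q => qsat r p \/ qsat r q
  | qnot p => ~ qsat r p
  end.

Definition univ_holds (G : grp) (phi : qf) : Prop :=
  forall r : nat -> G, qsat r phi.

Definition ultrafilter (U : (nat -> Prop) -> Prop) : Prop :=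
  [/\ U (fun _ => True),
      ~ U (fun _ => False),
      (forall A B : nat -> Prop, U A -> (forall n, A n -> B n) -> U B),
      (forall A B : nat -> Prop, U A -> U B -> U (fun n => A n /\ B n)) &
      (forall A : nat -> Prop, U A \/ U (fun n => ~ A n))].

(** G is isomorphic to a subgroup of (prod_{n >= 3} D_{2n}) / U, the factor
    of index k being D_{2(k+3)}: an injective homomorphism into the quotient,
    described through representatives f x of the classes. *)
Definition embeds_in_dih_ultraproduct (G : grp) (U : (nat -> Prop) -> Prop) : Prop :=
  exists f : G -> forall k : nat, D2 (k + 3),
    (forall x y : G, U (fun k => f (gmul x y) k = gmul (f x k) (f y k))) /\
    (forall x y : G, U (fun k => f x k = f y k) -> x = y).

(** Everything goes through the following approximation property of a marking
    [S] of [G]: for every finite set [W] of words there is a marking of a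
    dihedral group [Z/n >| Z/2] or [Z >| Z/2] killing exactly the words of [W] that
    [S] kills.  Limits of dihedral groups, fully residually dihedral groups and
    groups satisfying the universal theory of the [D_2n] (take the conjunction of
    the (in)equations of [W]) all have it.  By pigeonhole one may also fix the
    parities of the images of the generators.

    Conversely, under such a marking a word [t] evaluates to [(sum_i c_i * e_i(t), par t)]
    for an exponent vector [e(t)] in [Z^m].  Relators have even parity and their
    exponent vectors form a subgroup of [Z^m], which is finitely generated; a
    dihedral marking killing finitely many relators whose vectors generate it
    kills all relators, hence is a homomorphism.  So [G] is fully residually
    dihedral, with residual homomorphisms all inducing the same parity on [G].
    The even elements then form an abelian subgroup [A] on which any odd
    generator, an involution, acts by inversion, giving [G = A >| Z/2]; the even
    parts of the residual homomorphisms show that [A] is a limit of cyclic groups.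
    And when [A] is the limit of cyclic groups [A_k], [A >| Z/2] is the limit of
    the dihedral groups [A_k >| Z/2].
    Finally, any finite subset of [Z/n >| Z/2] or [Z >| Z/2] embeds into [D_2N] for
    arbitrarily large [N]; choosing at each [k] a homomorphism to [D_2(k+3)]
    injective on a ball as large as possible gives an embedding into the
    ultraproduct, and Los's theorem for quantifier-free formulas transfers
    universal sentences back from the [D_2n]. *)

From Stdlib Require Import List Classical.
From HB Require Import structures.
From mathcomp Require Import all_boot all_algebra.
From mathcomp Require Import boolp classical_sets filter zify ring.

Set Implicit Arguments.
Unset Strict Implicit.
Unset Printing Implicit Defensive.

Import GRing.Theory Num.Theory.
Local Open Scope ring_scope.

Lemma gmulV_eq1 (G : grp) (x y : G) : gmul x (ginv y) = gone -> x = y.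
Proof.
move=> h; have: gmul (gmul x (ginv y)) y = gmul gone y by rewrite h.
by rewrite -gmulA gmulV gmulr1 gmul1.
Qed.

Lemma ginv1 (G : grp) : ginv (@gone G) = gone.
Proof. by rewrite -{2}(gmulV (@gone G)) gmulr1. Qed.

Lemma hom1 (G H : grp) (f : G -> H) : hom f -> f gone = gone.
Proof. by move=> hf; apply: gidem; rewrite -hf gmul1. Qed.

Lemma homV (G H : grp) (f : G -> H) x : hom f -> f (ginv x) = ginv (f x).
Proof. by move=> hf; apply: gmulV_eq1; rewrite ginvK -hf gmulV; apply: hom1. Qed.

Lemma hom_eq1 (G H : grp) (f : G -> H) x : hom f -> x = gone -> f x = gone.
Proof. by move=> hf ->; apply: hom1. Qed.

Lemma hom_comp (G H K : grp) (f : G -> H) (g : H -> K) :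
  hom f -> hom g -> hom (fun x => g (f x)).
Proof. by move=> hf hg x y; rewrite hf hg. Qed.

Lemma can_hom (G H : grp) (f : G -> H) (g : H -> G) :
  hom f -> cancel f g -> cancel g f -> hom g.
Proof. by move=> hf fg gf x y; apply: (can_inj fg); rewrite hf !gf. Qed.

Lemma iso_refl (G : grp) : iso G G.
Proof. by exists id; split => //; exists id. Qed.

Lemma iso_trans (G H K : grp) : iso G H -> iso H K -> iso G K.
Proof.
move=> [f [hf [g [fg gf]]]] [f' [hf' [g' [fg' gf']]]].
exists (fun x => f' (f x)); split; first exact: hom_comp.
by exists (fun x => g (g' x)); split => x; rewrite ?fg' ?fg ?gf ?gf'.
Qed.

Lemma bij_hom_iso (G H : grp) (f : H -> G) : hom f -> injective f ->
  (forall x, exists y, f y = x) -> iso G H.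
Proof.
move=> hf finj fsurj; pose g x := proj1_sig (cid (fsurj x)).
have gK : cancel g f by move=> x; exact: (proj2_sig (cid (fsurj x))).
have fK : cancel f g by move=> y; apply: finj; rewrite gK.
by exists g; split; [exact: (can_hom hf fK gK)|exists f].
Qed.

Lemma teval_hom (G H : grp) (f : G -> H) r t : hom f ->
  teval (fun i => f (r i)) t = f (teval r t).
Proof.
move=> hf; elim: t => //= [|t1 IH1 t2 IH2|t IH]; first by rewrite hom1.
- by rewrite IH1 IH2 hf.
- by rewrite IH homV.
Qed.

Lemma teval_ext (G : grp) m (r r' : nat -> G) t :
  (forall i, (i < m)%N -> r i = r' i) -> tbound m t -> teval r t = teval r' t.
Proof.
move=> h; elim: t => /= [i|//|t1 IH1 t2 IH2 [b1 b2]|t IH b]; first exact: h.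
- by rewrite IH1 ?IH2.
- by rewrite IH.
Qed.

Lemma tbound_mono k k' t : (k <= k')%N -> tbound k t -> tbound k' t.
Proof.
move=> kk; elim: t => /= [i hi|//|t1 IH1 t2 IH2 [b1 b2]|t1 IH1 b1].
- exact: leq_trans hi kk.
- by split; [apply: IH1|apply: IH2].
- exact: IH1.
Qed.

Definition ab_zmod (B : grp) (hB : commutative_grp B) : Type := gcar B.
HB.instance Definition _ (B : grp) (hB : commutative_grp B) :=
  gen_eqMixin (ab_zmod hB).
HB.instance Definition _ (B : grp) (hB : commutative_grp B) :=
  gen_choiceMixin (ab_zmod hB).

Section AbZmod.
Variables (B : grp) (hB : commutative_grp B).
Let addA : associative (@gmul B : ab_zmod hB -> ab_zmod hB -> ab_zmod hB).
Proof. by move=> x y z; rewrite gmulA. Qed.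
Let addC : commutative (@gmul B : ab_zmod hB -> ab_zmod hB -> ab_zmod hB).
Proof. exact: hB. Qed.
Let add0 : left_id (@gone B : ab_zmod hB) (@gmul B).
Proof. exact: gmul1. Qed.
Let addN : left_inverse (@gone B : ab_zmod hB) (@ginv B) (@gmul B).
Proof. exact: gmulV. Qed.
HB.instance Definition _ := GRing.isZmodule.Build (ab_zmod hB) addA addC add0 addN.

Lemma teval_ab_zmod (r : nat -> B) t :
  teval (G := B) r t = teval (G := zmod_grp (ab_zmod hB)) r t.
Proof. by elim: t => //= [t1 -> t2 ->|t ->]. Qed.

Lemma teval_sdprod_zdih (r : nat -> inv_sdprod hB) t :
  teval (G := inv_sdprod hB) r t = teval (G := zdih (ab_zmod hB)) r t.
Proof. by elim: t => //= [t1 -> t2 ->|t ->]. Qed.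
End AbZmod.

(** Under a marking of [zdih Z] in which generator [i] has parity [p i], a word [t]
    evaluates to [(sum_i a_i *~ wexp p t i, wpar p t)]. *)
Fixpoint wpar (p : nat -> bool) (t : term) : bool :=
  match t with
  | tvar i => p i
  | tone => false
  | tmul a b => wpar p a (+) wpar p b
  | tinv a => wpar p a
  end.

Fixpoint wexp (p : nat -> bool) (t : term) : nat -> int :=
  match t with
  | tvar i => fun j => ((j == i) : nat)%:Z
  | tone => fun _ => 0
  | tmul a b => fun j => wexp p a j + (if wpar p a then - wexp p b j else wexp p b j)
  | tinv a => fun j => if wpar p a then wexp p a j else - wexp p a j
  end.

Definition zcomb (Z : zmodType) m (c : nat -> Z) (v : nat -> int) : Z :=
  \sum_(i < m) c i *~ v i.

Lemma zcombD (Z : zmodType) m c (v w : nat -> int) :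
  zcomb m c (fun j => v j + w j) = zcomb m c v + zcomb m c w :> Z.
Proof. by rewrite /zcomb -big_split; apply: eq_bigr => i _; rewrite mulrzDr. Qed.

Lemma zcombN (Z : zmodType) m c (v : nat -> int) :
  zcomb m c (fun j => - v j) = - zcomb m c v :> Z.
Proof. by rewrite /zcomb -sumrN; apply: eq_bigr => i _; rewrite mulrNz. Qed.

Lemma zcomb0 (Z : zmodType) m c : zcomb m c (fun _ => 0) = 0 :> Z.
Proof. by rewrite /zcomb big1. Qed.

Lemma eq_zcomb (Z : zmodType) m c (v w : nat -> int) :
  (forall j, (j < m)%N -> v j = w j) -> zcomb m c v = zcomb m c w :> Z.
Proof. by move=> h; apply: eq_bigr => i _; rewrite h. Qed.

Lemma zcomb_delta (Z : zmodType) m (c : nat -> Z) i : (i < m)%N ->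
  zcomb m c (fun j => ((j == i) : nat)%:Z) = c i.
Proof.
move=> hi; rewrite /zcomb (bigD1 (Ordinal hi)) //= eqxx mulr1z big1 ?addr0 //.
move=> j hj; suff -> : (nat_of_ord j == i) = false by [].
by apply/negbTE; apply: contra hj => /eqP e; apply/eqP/val_inj.
Qed.

Lemma teval_zdih (Z : zmodType) m p (h : nat -> zdih Z) t :
  (forall i, (i < m)%N -> (h i).2 = p i) -> tbound m t ->
  teval h t = (zcomb m (fun i => (h i).1) (wexp p t), wpar p t).
Proof.
move=> hp; elim: t => /= [i hi|_|t1 IH1 t2 IH2 [b1 b2]|t IH b].
- by rewrite zcomb_delta // -hp //; case: (h i).
- by rewrite zcomb0.
- by rewrite IH1 // IH2 // /dmul /= zcombD; case: (wpar p t1); rewrite //= zcombN.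
- by rewrite IH // /dinv /=; case: (wpar p t); rewrite //= zcombN.
Qed.

Lemma teval_zdih_par (Z : zmodType) m p (h : nat -> zdih Z) t :
  (forall i, (i < m)%N -> (h i).2 = p i) -> tbound m t ->
  (teval h t).2 = wpar p t.
Proof. by move=> hp hb; rewrite (teval_zdih hp hb). Qed.

Lemma wpar_even p m t :
  (forall i, (i < m)%N -> p i = false) -> tbound m t -> wpar p t = false.
Proof.
move=> h; elim: t => /= [i /h //|//|t1 IH1 t2 IH2 [b1 b2]|t IH b].
- by rewrite IH1 // IH2.
- exact: IH.
Qed.

Lemma teval_even (Z : zmodType) (c : nat -> zmod_grp Z) t :
  teval (fun i => ((c i : Z), false) : zdih Z) t = (teval c t, false).
Proof. by elim: t => //= [t1 -> t2 ->|t ->]. Qed.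

Fixpoint tpown (t : term) (n : nat) : term :=
  match n with 0 => tone | n'.+1 => tmul (tpown t n') t end.

Definition tpow (t : term) (z : int) : term :=
  match z with Posz n => tpown t n | Negz n => tinv (tpown t n.+1) end.

Fixpoint tcomb (v : nat -> int) (m : nat) : term :=
  match m with 0 => tone | m'.+1 => tmul (tcomb v m') (tpow (tvar m') (v m')) end.

Lemma tbound_tpow m t z : tbound m t -> tbound m (tpow t z).
Proof.
move=> bt; have h n : tbound m (tpown t n) by elim: n.
by case: z => n /=.
Qed.

Lemma tbound_tcomb v m : tbound m (tcomb v m).
Proof.
suff h k : (k <= m)%N -> tbound m (tcomb v k) by exact: h.
elim: k => // k IH hk /=; split; first exact/IH/ltnW.
exact: tbound_tpow.
Qed.

Lemma teval_tpow (Z : zmodType) (c : nat -> zmod_grp Z) t z :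
  teval c (tpow t z) = (teval c t : Z) *~ z.
Proof.
have h n : teval c (tpown t n) = (teval c t : Z) *+ n.
  by elim: n => [|n IH] /=; rewrite ?mulr0n // IH mulrSr.
case: z => n; first by rewrite /tpow h pmulrn.
have e : teval c (tinv (tpown t n.+1)) = - (teval c (tpown t n.+1) : Z) by [].
by rewrite /tpow e h NegzE mulrNz pmulrn.
Qed.

Lemma teval_tcomb (Z : zmodType) (c : nat -> zmod_grp Z) v m :
  teval c (tcomb v m) = zcomb m c v.
Proof.
elim: m => [|m IH] /=; first by rewrite /zcomb big_ord0.
by rewrite /zcomb big_ord_recr /= -/(zcomb m c v) -IH teval_tpow.
Qed.

(** * Subgroups of Z and of Z^m *)

Definition zsubgroup (E : int -> Prop) :=
  [/\ E 0, (forall a b, E a -> E b -> E (a + b)) & (forall a, E a -> E (- a))].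

Lemma zsubgroupM E a q : zsubgroup E -> E a -> E (q * a).
Proof.
case=> E0 ED EN Ea.
have En (n : nat) : E (n%:Z * a).
  elim: n => [|n IH]; first by rewrite mul0r.
  by rewrite -addn1 PoszD mulrDl mul1r; apply: ED.
by case: q => n; [exact: En|rewrite NegzE mulNr; apply: EN].
Qed.

Lemma zsubgroup_principal E : zsubgroup E ->
  exists d : nat, E d%:Z /\ forall z, E z -> exists q, z = q * d%:Z.
Proof.
move=> hE; have [E0 ED EN] := hE.
have [[n [n0 En]]|no] := pselect (exists n : nat, (0 < n)%N /\ E n%:Z); last first.
  exists 0%N; split => // z Ez; exists 0; rewrite mulr0.
  case: (eqVneq z 0) => // z0; exfalso; apply: no.
  exists `|z|%N; split; first by rewrite absz_gt0.
  by case: z z0 Ez => k // _ /EN; rewrite NegzE opprK.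
have exP : exists k, `[< (0 < k)%N /\ E k%:Z >] by exists n; apply/asboolP.
have [d /asboolP [d0 Ed] dmin] := ex_minnP exP.
exists d; split => // z Ez; exists (z %/ d%:Z)%Z.
have dz0 : d%:Z != 0 by rewrite eqz_nat -lt0n.
have Er : E (z %% d%:Z)%Z.
  have -> : (z %% d%:Z)%Z = z + - ((z %/ d%:Z)%Z * d%:Z).
    by rewrite {2}(divz_eq z d%:Z); ring.
  by apply: ED => //; apply: EN; apply: zsubgroupM.
have rlt : (z %% d%:Z)%Z < d%:Z by apply: ltz_pmod; rewrite ltz_nat.
have [k ek] : exists k : nat, (z %% d%:Z)%Z = k%:Z.
  by exists `|(z %% d%:Z)%Z|%N; rewrite gez0_abs // modz_ge0.
have [k0|kpos] := posnP k; first by rewrite {1}(divz_eq z d%:Z) ek k0 addr0.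
have : (d <= k)%N by apply: dmin; apply/asboolP; rewrite -ek.
by rewrite ek in rlt; lia.
Qed.

Inductive zspan (L : list (nat -> int)) : (nat -> int) -> Prop :=
 | zspan_in v : In v L -> zspan L v
 | zspan0 : zspan L (fun _ => 0)
 | zspanD v w : zspan L v -> zspan L w -> zspan L (fun j => v j + w j)
 | zspanN v : zspan L v -> zspan L (fun j => - v j).

Definition vsubgroup (P : (nat -> int) -> Prop) :=
  [/\ P (fun _ => 0), (forall v w, P v -> P w -> P (fun j => v j + w j))
    & (forall v, P v -> P (fun j => - v j))].

Lemma vsubgroup_zspan L : vsubgroup (zspan L).
Proof. by split; [exact: zspan0|exact: zspanD|exact: zspanN]. Qed.

Lemma vsubgroupZ P v q : vsubgroup P -> P v -> P (fun j => q * v j).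
Proof.
case=> P0 PD PN Pv.
have Pn (n : nat) : P (fun j => n%:Z * v j).
  elim: n => [|n IH].
    by rewrite (_ : (fun j => _) = fun _ => 0) //; apply: funext => j; rewrite mul0r.
  rewrite (_ : (fun j => _) = fun j => (fun j => n%:Z * v j) j + v j); first exact: PD.
  by apply: funext => j /=; rewrite -addn1 PoszD mulrDl mul1r.
case: q => n; first exact: Pn.
rewrite (_ : (fun j => _) = fun j => - (fun j => n.+1%:Z * v j) j); first exact: PN.
by apply: funext => j /=; rewrite NegzE mulNr.
Qed.

Lemma zspan_sub L L' v : (forall x, In x L -> In x L') -> zspan L v -> zspan L' v.
Proof. by move=> sub; elim=> [w /sub|| w w' _ IH _ IH'|w _ IH]; constructor. Qed.

Lemma zspan_coord0 L v k : (forall x, In x L -> x k = 0) -> zspan L v -> v k = 0.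
Proof.
move=> h; elim=> [w /h //|//| w w' _ IH _ IH' /=|w _ IH /=].
- by rewrite IH IH' addr0.
- by rewrite IH oppr0.
Qed.

(** Z^m is Noetherian: the first [m] coordinates of a subgroup of Z^N are those of a
    finitely generated subgroup.  Induction on [m]: the last coordinates form a
    subgroup of Z, generated by the last coordinate of some [u]. *)
Lemma vsubgroup_fin_gen m P : vsubgroup P ->
  exists L, (forall v, In v L -> P v) /\
  (forall v, P v -> exists w, zspan L w /\ forall j, (j < m)%N -> v j = w j).
Proof.
elim: m P => [|m IH] P hP.
  by exists nil; split => // v _; exists (fun _ => 0); split => //; exact: zspan0.
have [P0 PD PN] := hP.
pose P' v := P v /\ v m = 0.
have hP' : vsubgroup P'.
  split; first by split.
  - by move=> v w [Pv v0] [Pw w0]; split; [apply: PD|rewrite /= v0 w0 addr0].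
  - by move=> v [Pv v0]; split; [apply: PN|rewrite /= v0 oppr0].
have [L' [L'P L'span]] := IH P' hP'.
pose E z := exists v, P v /\ v m = z.
have hE : zsubgroup E.
  split; first by exists (fun _ => 0).
  - move=> a b [v [Pv <-]] [w [Pw <-]].
    by exists (fun j => v j + w j); split => //; apply: PD.
  - by move=> a [v [Pv <-]]; exists (fun j => - v j); split => //; apply: PN.
have [d [[u [Pu um]] dgen]] := zsubgroup_principal hE.
exists (u :: L'); split; first by move=> v [<-|/L'P []].
move=> v Pv; have [q eq] := dgen (v m) (ex_intro _ v (conj Pv erefl)).
pose v' j := v j + - (q * u j).
have Pv' : P' v'.
  split; first by apply: PD => //; apply: PN; apply: vsubgroupZ.
  by rewrite /v' eq um subrr.
have [w' [sw' ew']] := L'span v' Pv'.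
have w'm : w' m = 0 by apply: (zspan_coord0 (L := L')) => // x /L'P [].
exists (fun j => w' j + q * u j); split.
  apply: zspanD; first by apply: zspan_sub sw' => x hx; right.
  by apply: vsubgroupZ; [exact: vsubgroup_zspan|apply: zspan_in; left].
move=> j; rewrite ltnS leq_eqVlt => /orP [/eqP ->|jm].
  by rewrite w'm add0r eq um.
by rewrite -ew' // /v' addrNK.
Qed.

(** * Approximation of a marked group by dihedral groups *)

Lemma memIn (T : eqType) (x : T) (s : seq T) : x \in s -> In x s.
Proof. by elim: s => //= y s IH; rewrite inE => /orP [/eqP ->|/IH]; [left|right]. Qed.

Lemma list_eventually (A : Type) (Q : A -> nat -> Prop) (W : list A) :
  (forall w, In w W -> exists N, forall k, (N <= k)%N -> Q w k) ->
  exists N, forall k, (N <= k)%N -> forall w, In w W -> Q w k.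
Proof.
elim: W => [|w W IH] h; first by exists 0%N.
have [N1 h1] := h w (or_introl erefl).
have [N2 h2] := IH (fun z hz => h z (or_intror hz)).
exists (maxn N1 N2) => k hk z [<-|hz].
  by apply: h1; apply: leq_trans hk; apply: leq_maxl.
by apply: h2 => //; apply: leq_trans hk; apply: leq_maxr.
Qed.

Lemma list_nontrivial (G : grp) (L : list G) : exists F,
  (forall x, In x F -> x <> gone) /\ (forall x, In x L -> x <> gone -> In x F).
Proof.
elim: L => [|y L [F [h1 h2]]]; first by exists nil.
have [->|ny] := pselect (y = gone).
  by exists F; split => // x [<-|hx] //; apply: h2.
exists (y :: F); split; first by move=> x [<-|] //; apply: h1.
by move=> x [<-|hx] nx; [left|right; apply: h2].
Qed.

Definition cyc_zmod (b : option nat) : zmodType :=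
  match b with Some n => ('I_n.-1.+1 : zmodType) | None => (int : zmodType) end.

Lemma dihedral_cyc_zmod b : dihedral (zdih (cyc_zmod b)).
Proof.
by case: b => [n|]; [left; exists n.-1.+1; split => //|right]; exact: iso_refl.
Qed.

Definition same_zeros (G H : grp) (S : nat -> G) (h : nat -> H) (W : list term) :=
  forall w, In w W -> (teval h w = gone <-> teval S w = gone).

Definition dihedral_approx (G : grp) m (S : nat -> G) : Prop :=
  forall W : list term, (forall w, In w W -> tbound m w) ->
  exists H : grp, dihedral H /\ exists h : nat -> H, same_zeros S h W.

Definition dihedral_approx_par (G : grp) m (S : nat -> G) (p : nat -> bool) : Prop :=
  forall W : list term, (forall w, In w W -> tbound m w) ->
  exists b (h : nat -> zdih (cyc_zmod b)),
    (forall i, (i < m)%N -> (h i).2 = p i) /\ same_zeros S h W.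

Definition dihedrally_approximable (G : grp) :=
  exists m (S : nat -> G) p, generates m S /\ dihedral_approx_par m S p.

Lemma same_zeros_iso (G H K : grp) (S : nat -> G) (h : nat -> H) W :
  iso H K -> same_zeros S h W -> exists h' : nat -> K, same_zeros S h' W.
Proof.
move=> [f [hf [g [fg gf]]]] hm; exists (fun i => f (h i)) => w /hm <-.
rewrite teval_hom //; split => [e|]; last exact: hom_eq1.
by rewrite -(fg (teval h w)) e (hom1 (can_hom hf fg gf)).
Qed.

(** Pigeonhole: if each of the finitely many parity patterns failed on some list of
    words, the concatenation of these lists could not be approximated at all. *)
Lemma dihedral_approx_par_exists (G : grp) m (S : nat -> G) :
  dihedral_approx m S -> exists p, dihedral_approx_par m S p.
Proof.
move=> hLA; apply: NNPP => nop.
have hs (s : m.-tuple bool) : exists W, (forall w, In w W -> tbound m w) /\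
    ~ (exists b (h : nat -> zdih (cyc_zmod b)),
         (forall i, (i < m)%N -> (h i).2 = nth false s i) /\ same_zeros S h W).
  apply: NNPP => hn; apply: nop; exists (fun i => nth false s i) => W hW.
  by apply: NNPP => hn2; apply: hn; exists W.
pose Wf s := proj1_sig (cid (hs s)).
pose W := List.concat (List.map Wf (enum {: m.-tuple bool})).
have inW s w : In w (Wf s) -> In w W.
  move=> hw; apply/in_concat; exists (Wf s); split => //.
  by apply: in_map; apply: memIn; rewrite mem_enum.
have bW w : In w W -> tbound m w.
  move=> /in_concat [l [/in_map_iff [s [<- _]] hw]].
  exact: (proj1 (proj2_sig (cid (hs s))) w hw).
have [H [dH [h0 hm0]]] := hLA W bW.
have [b [h hm]] : exists b (h : nat -> zdih (cyc_zmod b)), same_zeros S h W.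
  case: dH => [[n [_ iH]]|iH]; have [h' ?] := same_zeros_iso iH hm0.
    by exists (Some n), h'.
  by exists None, h'.
pose s0 := [tuple (h i).2 | i < m].
apply: (proj2 (proj2_sig (cid (hs s0)))); exists b, h; split.
  by move=> i hi; rewrite -[i]/(nat_of_ord (Ordinal hi)) nth_mktuple.
by move=> w hw; apply: hm; apply: inW hw.
Qed.

Lemma approximable_of_dihedral_approx (G : grp) m (S : nat -> G) :
  generates m S -> dihedral_approx m S -> dihedrally_approximable G.
Proof. by move=> gS /dihedral_approx_par_exists [p hp]; exists m, S, p. Qed.

Lemma limit_dihedral_approx (G : grp) : limit_of dihedral G ->
  exists m (S : nat -> G), generates m S /\ dihedral_approx m S.
Proof.
move=> [m [S [gS [Gs [Ss [dG [gSs cv]]]]]]]; exists m, S; split => // W bW.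
have [N hN] := @list_eventually _
  (fun w k => teval (Ss k) w = gone <-> teval S w = gone) W (fun w hw => cv w (bW w hw)).
by exists (Gs N); split; [exact: dG|exists (Ss N) => w hw; apply: hN].
Qed.

Lemma residually_dihedral_approx (G : grp) m (S : nat -> G) :
  fully_residually dihedral G -> dihedral_approx m S.
Proof.
move=> hres W bW.
have [F [hF1 hF2]] := list_nontrivial (List.map (teval S) W).
have [H [dH [f [hf nf]]]] := hres F hF1.
exists H; split => //; exists (fun i => f (S i)) => w hw; rewrite teval_hom //.
split => [e|]; last exact: hom_eq1.
apply: NNPP => ne; apply: (nf (teval S w)) => //; apply: hF2 => //.
exact: in_map.
Qed.

Definition zero_pattern (G : grp) (S : nat -> G) (W : list term) : qf :=
  fold_right qand (qeq tone tone)
    (List.map (fun w => if `[< teval S w = gone >] then qeq w tone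
                        else qnot (qeq w tone)) W).

Lemma qsat_zero_pattern (G H : grp) (S : nat -> G) (r : nat -> H) W :
  qsat r (zero_pattern S W) <-> same_zeros S r W.
Proof.
elim: W => [|w W IH] /=; first by split.
case: (asboolP (teval S w = gone)) => /= ew; split.
- by move=> [e /IH hW] u [<-|/hW].
- by move=> h; split; [apply/(h w (or_introl erefl))|apply/IH => u hu; apply: h; right].
- by move=> [e /IH hW] u [<-|/hW] //; split => // /e.
- by move=> h; split; [move/(h w (or_introl erefl))|apply/IH => u hu; apply: h; right].
Qed.

Lemma univ_theory_dihedral_approx (G : grp) m (S : nat -> G) :
  (forall phi : qf, (forall n : nat, (3 <= n)%N -> univ_holds (D2 n) phi) ->
       univ_holds G phi) -> dihedral_approx m S.
Proof.
move=> hTh W bW; apply: NNPP => nap.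
have : univ_holds G (qnot (zero_pattern S W)).
  apply: hTh => n n3 r /qsat_zero_pattern hr; apply: nap.
  exists (D2 n); split; last by exists r.
  by left; exists n; split; [exact: leq_trans n3|exact: iso_refl].
by move=> /(_ S); apply; apply/qsat_zero_pattern.
Qed.

(** * From dihedral approximation to residual homomorphisms *)

Definition gen_word (G : grp) m (S : nat -> G) (genS : generates m S) (x : G) : term :=
  proj1_sig (cid (genS x)).

Lemma gen_wordP (G : grp) m (S : nat -> G) (genS : generates m S) x :
  tbound m (gen_word genS x) /\ teval S (gen_word genS x) = x.
Proof. exact: proj2_sig (cid (genS x)). Qed.

Lemma von_dyck (G H : grp) m (S : nat -> G) (h : nat -> H) : generates m S ->
  (forall t, tbound m t -> teval S t = gone -> teval h t = gone) ->
  exists phi : G -> H, hom phi /\ forall t, tbound m t -> phi (teval S t) = teval h t.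
Proof.
move=> genS rel; pose word := gen_word genS; pose phi x := teval h (word x).
have phiE t : tbound m t -> phi (teval S t) = teval h t.
  move=> bt; have [bw ew] := gen_wordP genS (teval S t).
  symmetry; apply: gmulV_eq1; have := rel (tmul t (tinv (word (teval S t)))).
  by rewrite /= ew gmulVr; apply.
exists phi; split => // x y.
have [bx ex] := gen_wordP genS x; have [byy ey] := gen_wordP genS y.
by rewrite -{1}ex -{1}ey -[gmul _ _]/(teval S (tmul (word x) (word y))) phiE.
Qed.

Lemma list_choice (A B : Type) (R : A -> B -> Prop) (L : list A) :
  (forall x, In x L -> exists y, R x y) ->
  exists L' : list B, (forall y, In y L' -> exists x, In x L /\ R x y) /\
     forall x, In x L -> exists y, In y L' /\ R x y.
Proof.
elim: L => [|x L IH] h; first by exists nil.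
have [y Ry] := h x (or_introl erefl).
have [L' [H1 HL']] := IH (fun z hz => h z (or_intror hz)).
exists (y :: L'); split.
  move=> y' [<-|/H1 [x' [? ?]]]; first by exists x; split; [left|].
  by exists x'; split; [right|].
move=> z [<-|/HL' [y' [? ?]]]; first by exists y; split; [left|].
by exists y'; split; [right|].
Qed.

Section ResidualHom.
Variables (G : grp) (m : nat) (S : nat -> G) (p : nat -> bool).
Hypothesis genS : generates m S.
Hypothesis approx : dihedral_approx_par m S p.

Lemma relator_even t : tbound m t -> teval S t = gone -> wpar p t = false.
Proof.
move=> bt e; have [|b [h [hp hm]]] := approx (W := t :: nil).
  by move=> w [<-|[]].
have := hm t (or_introl erefl); rewrite e => -[_ /(_ erefl) e1].
by rewrite -(teval_zdih_par hp bt) e1.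
Qed.

(** Relators are even, so their exponent vectors form a subgroup of [Z^m]; finitely
    many relators whose vectors generate it control all of them. *)
Lemma finite_relator_basis : exists T : list term,
  (forall t, In t T -> tbound m t /\ teval S t = gone) /\
  forall (Z : zmodType) (h : nat -> zdih Z),
    (forall i, (i < m)%N -> (h i).2 = p i) -> (forall t, In t T -> teval h t = gone) ->
    forall t, tbound m t -> teval S t = gone -> teval h t = gone.
Proof.
pose R v t := [/\ tbound m t, teval S t = gone & forall j, (j < m)%N -> v j = wexp p t j].
have hP : vsubgroup (fun v => exists t, R v t).
  split; first by exists tone.
  - move=> v w [t1 [b1 e1 v1]] [t2 [b2 e2 v2]]; exists (tmul t1 t2); split => //=.
      by rewrite e1 e2 gmul1.
    by move=> j hj; rewrite v1 // v2 // (relator_even b1 e1).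
  - move=> v [t1 [b1 e1 v1]]; exists (tinv t1); split => //=.
      by rewrite e1 ginv1.
    by move=> j hj; rewrite v1 // (relator_even b1 e1).
have [L [LP Lspan]] := vsubgroup_fin_gen m hP.
have [T [TL LT]] := list_choice LP.
exists T; split; first by move=> t /TL [v [_ []]].
move=> Z h hp hT t bt et; pose c i := (h i).1.
have vanL v : In v L -> zcomb m c v = 0.
  move=> /LT [u [hu [bu eu vu]]].
  by have := hT u hu; rewrite (teval_zdih hp bu) (eq_zcomb _ vu) => -[].
have vanS v : zspan L v -> zcomb m c v = 0.
  elim=> [w /vanL //||w w' _ IH _ IH'|w _ IH]; first exact: zcomb0.
  - by rewrite zcombD IH IH' addr0.
  - by rewrite zcombN IH oppr0.
have [w [sw ew]] := Lspan (wexp p t) (ex_intro _ t (And3 bt et (fun j _ => erefl))).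
by rewrite (teval_zdih hp bt) (relator_even bt et) (eq_zcomb _ ew) vanS.
Qed.

Lemma dihedral_separation (F : list G) : (forall x, In x F -> x <> gone) ->
  exists b (phi : G -> zdih (cyc_zmod b)), hom phi /\
    (forall i, (i < m)%N -> (phi (S i)).2 = p i) /\
    (forall x, In x F -> phi x <> gone).
Proof.
move=> hF; have [T [TS Tkill]] := finite_relator_basis.
pose word := gen_word genS.
have [|b [h [hp hm]]] := approx (W := T ++ List.map word F).
  move=> w hw; case: (in_app_or _ _ _ hw) => [/TS [] //|/in_map_iff [x [<- _]]].
  exact: (proj1 (gen_wordP genS x)).
have [phi [hphi phiE]] : exists phi : G -> zdih (cyc_zmod b),
    hom phi /\ forall t, tbound m t -> phi (teval S t) = teval h t.
  apply: von_dyck => //; apply: Tkill => // t hT.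
  by apply/(hm t); [apply: in_or_app; left|exact: (proj2 (TS t hT))].
exists b, phi; split => //; split.
  by move=> i hi; rewrite -[S i]/(teval S (tvar i)) phiE // hp.
move=> x hx; have [bx ex] := gen_wordP genS x.
have hW : In (word x) (T ++ List.map word F) by apply: in_or_app; right; apply: in_map.
by have := hF x hx; rewrite -ex phiE // => nx /(proj1 (hm _ hW)).
Qed.

End ResidualHom.

Lemma approximable_residually (G : grp) :
  dihedrally_approximable G -> fully_residually dihedral G.
Proof.
move=> [m [S [p [gS hL]]]] F hF.
have [b [phi [hphi [_ nz]]]] := dihedral_separation gS hL hF.
by exists (zdih (cyc_zmod b)); split; [exact: dihedral_cyc_zmod|exists phi].
Qed.

Section Subgroup.
Variables (G : grp) (P : G -> Prop) (P1 : P gone)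
  (PM : forall x y, P x -> P y -> P (gmul x y)) (PV : forall x, P x -> P (ginv x)).

Definition sub_car := {x : G | P x}.

Lemma sub_val_inj (x y : sub_car) : proj1_sig x = proj1_sig y -> x = y.
Proof. by case: x y => [x px] [y py] /= e; subst y; rewrite (Prop_irrelevance px py). Qed.

Definition sub_mul (x y : sub_car) : sub_car :=
  exist _ (gmul (proj1_sig x) (proj1_sig y)) (PM (proj2_sig x) (proj2_sig y)).
Definition sub_inv (x : sub_car) : sub_car := exist _ (ginv (proj1_sig x)) (PV (proj2_sig x)).
Definition sub_one : sub_car := exist _ gone P1.

Lemma sub_mulA x y z : sub_mul x (sub_mul y z) = sub_mul (sub_mul x y) z.
Proof. by apply: sub_val_inj; rewrite /= gmulA. Qed.
Lemma sub_mul1 x : sub_mul sub_one x = x.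
Proof. by apply: sub_val_inj; rewrite /= gmul1. Qed.
Lemma sub_mulV x : sub_mul (sub_inv x) x = sub_one.
Proof. by apply: sub_val_inj; rewrite /= gmulV. Qed.

Definition subgrp : grp := Grp sub_mulA sub_mul1 sub_mulV.

Lemma teval_val (r : nat -> subgrp) t :
  proj1_sig (teval r t) = teval (fun i => proj1_sig (r i)) t.
Proof. by elim: t => //= [t1 -> t2 ->|t ->]. Qed.
End Subgroup.

Section SpanGroup.
Variables (H : grp) (m : nat) (c : nat -> H).

Definition in_span (x : H) := exists t, tbound m t /\ teval c t = x.

Lemma in_span1 : in_span gone. Proof. by exists tone. Qed.
Lemma in_spanM x y : in_span x -> in_span y -> in_span (gmul x y).
Proof. by move=> [t [bt <-]] [u [bu <-]]; exists (tmul t u). Qed.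
Lemma in_spanV x : in_span x -> in_span (ginv x).
Proof. by move=> [t [bt <-]]; exists (tinv t). Qed.

Definition span_grp : grp := subgrp in_span1 in_spanM in_spanV.

Definition span_word (i : nat) := if (i < m)%N then tvar i else tone.

Lemma tbound_span_word i : tbound m (span_word i).
Proof. by rewrite /span_word; case: ifP. Qed.

Definition span_gens (i : nat) : span_grp :=
  exist _ (teval c (span_word i)) (ex_intro _ _ (conj (tbound_span_word i) erefl)).

Lemma teval_span_gens t : tbound m t -> proj1_sig (teval span_gens t) = teval c t.
Proof.
by move=> bt; rewrite teval_val; apply: teval_ext bt => i hi; rewrite /= /span_word hi.
Qed.

Lemma span_gens_generate : generates m span_gens.
Proof.
move=> [x [t [bt ex]]]; exists t; split => //.
by apply: sub_val_inj; rewrite teval_span_gens.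
Qed.
End SpanGroup.

Fixpoint words_upto (m k : nat) : list term :=
  match k with
  | 0 => tone :: List.map tvar (iota 0 m)
  | k'.+1 => words_upto m k' ++ List.map tinv (words_upto m k') ++
       List.flat_map (fun a => List.map (tmul a) (words_upto m k')) (words_upto m k')
  end.

Fixpoint depth (t : term) : nat :=
  match t with
  | tvar _ | tone => 0
  | tmul a b => (maxn (depth a) (depth b)).+1
  | tinv a => (depth a).+1
  end.

Lemma words_upto_mono m k k' t :
  (k <= k')%N -> In t (words_upto m k) -> In t (words_upto m k').
Proof.
move=> hk; rewrite -(subnKC hk); elim: (k' - k)%N => [|d IH]; first by rewrite addn0.
by move=> /IH h; rewrite addnS /=; apply: in_or_app; left.
Qed.

Lemma words_upto_depth m t : tbound m t -> In t (words_upto m (depth t)).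
Proof.
elim: t => [i|_|a IHa b IHb [ba bb]|a IHa ba] /=.
- by move=> hi; right; apply: in_map; apply: memIn; rewrite mem_iota.
- by left.
- apply: in_or_app; right; apply: in_or_app; right; apply/in_flat_map.
  exists a; split; first by apply: words_upto_mono (IHa ba); apply: leq_maxl.
  by apply: in_map; apply: words_upto_mono (IHb bb); apply: leq_maxr.
- by apply: in_or_app; right; apply: in_or_app; left; apply: in_map; apply: IHa.
Qed.

Lemma cyc_zmod_generator b : exists g : cyc_zmod b, forall x, exists z, x = g *~ z.
Proof.
case: b => [n|] /=; last by exists 1 => x; exists x; rewrite intz.
exists (inZp 1) => x; exists (nat_of_ord x)%:Z; apply: val_inj => /=.
by rewrite -pmulrn Zp_mulrn /= modnMml mul1n modn_small.
Qed.

Lemma cyclic_span_grp (Z : zmodType) (g : Z) m (c : nat -> zmod_grp Z) :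
  (forall x, exists z, x = g *~ z) -> cyclic (span_grp m c).
Proof.
move=> gen; pose E z := in_span m c (g *~ z).
have hE : zsubgroup E.
  split; first by rewrite /E mulr0z; exact: in_span1.
  - by move=> a b ha hb; rewrite /E mulrzDr; apply: in_spanM.
  - by move=> a ha; rewrite /E mulrNz; apply: in_spanV.
have [d [Ed gd]] := zsubgroup_principal hE.
exists (exist (in_span m c) (g *~ d%:Z) Ed) => [[x Px]]; have [z ez] := gen x; subst x.
have [q eq] := gd z Px; exists (tpow (tvar 0) q); split; first exact: tbound_tpow.
by apply: sub_val_inj; rewrite teval_val teval_tpow /= eq mulrC mulrzA.
Qed.

(** * The even subgroup and the splitting [G = A >| Z/2] *)

Section Splitting.
Variables (G : grp) (m : nat) (S : nat -> G) (p : nat -> bool).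
Hypothesis genS : generates m S.
Hypothesis approx : dihedral_approx_par m S p.

Definition par_hom b (phi : G -> zdih (cyc_zmod b)) :=
  hom phi /\ forall i, (i < m)%N -> (phi (S i)).2 = p i.

Lemma par_hom_separates z :
  (forall b (phi : G -> zdih (cyc_zmod b)), par_hom phi -> phi z = gone) -> z = gone.
Proof.
move=> h; apply: NNPP => nz.
have [|b [phi [hf [hp nf]]]] := dihedral_separation genS approx (F := z :: nil).
  by move=> x [<-|[]].
by apply: (nf z (or_introl erefl)); apply: h.
Qed.

Definition parity (x : G) : bool := wpar p (gen_word genS x).

Lemma parityE t : tbound m t -> parity (teval S t) = wpar p t.
Proof.
move=> bt; set w := gen_word genS (teval S t); have [bw ew] := gen_wordP genS (teval S t).
have : wpar p (tmul t (tinv w)) = false.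
  by apply: (relator_even approx); rewrite //= ew gmulVr.
by rewrite /parity -/w /=; case: (wpar p t); case: (wpar p w).
Qed.

Lemma parityM x y : parity (gmul x y) = parity x (+) parity y.
Proof.
have [bx <-] := gen_wordP genS x; have [byy <-] := gen_wordP genS y.
by rewrite -[gmul _ _]/(teval S (tmul _ _)) !parityE.
Qed.

Lemma parity1 : parity gone = false.
Proof. by rewrite -[gone]/(teval S tone) parityE. Qed.

Lemma parityV x : parity (ginv x) = parity x.
Proof. by have [bx <-] := gen_wordP genS x; rewrite -[ginv _]/(teval S (tinv _)) !parityE. Qed.

Lemma par_hom_parity b (phi : G -> zdih (cyc_zmod b)) x : par_hom phi -> (phi x).2 = parity x.
Proof.
move=> [hf hp]; have [bx <-] := gen_wordP genS x.
by rewrite parityE // -teval_hom //; apply: teval_zdih_par bx.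
Qed.

Lemma even_commute x y : parity x = false -> parity y = false -> gmul x y = gmul y x.
Proof.
move=> px py; apply: gmulV_eq1; apply: par_hom_separates => b phi hc.
have [hf _] := hc; rewrite hf homV // !hf.
move: (par_hom_parity x hc) (par_hom_parity y hc); rewrite px py.
case: (phi x) => a [] // _; case: (phi y) => c [] // _.
by rewrite /= /dmul /= [c + a]addrC subrr.
Qed.

Hypothesis nonab : ~ commutative_grp G.

Lemma odd_generator : exists j, (j < m)%N && p j.
Proof.
apply: NNPP => hn; apply: nonab => x y.
have even : forall z, parity z = false.
  move=> z; have [bz <-] := gen_wordP genS z; rewrite parityE //.
  by apply: wpar_even bz => i hi; apply/negbTE/negP => pi; apply: hn; exists i; rewrite hi.
exact: even_commute.
Qed.

Definition reflection : G := S (xchoose odd_generator).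

Lemma parity_reflection : parity reflection = true.
Proof.
have /andP [jm pj] := xchooseP odd_generator.
by rewrite -[reflection]/(teval S (tvar _)) parityE.
Qed.

Lemma odd_square x : parity x = true -> gmul x x = gone.
Proof.
move=> px; apply: par_hom_separates => b phi hc; have [hf _] := hc; rewrite hf.
move: (par_hom_parity x hc); rewrite px; case: (phi x) => a [] // _.
by rewrite /= /dmul /= subrr.
Qed.

Lemma odd_conj_even r x : parity r = true -> parity x = false ->
  gmul r x = gmul (ginv x) r.
Proof.
move=> pr px; apply: gmulV_eq1; apply: par_hom_separates => b phi hc.
have [hf _] := hc; rewrite hf (homV _ hf) !hf (homV _ hf).
move: (par_hom_parity x hc) (par_hom_parity r hc); rewrite px pr.
case: (phi x) => c [] // _; case: (phi r) => a [] // _.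
by rewrite /= /dmul /= [- c + a]addrC subrr.
Qed.

Let even x := parity x = false.
Let even1 : even gone. Proof. exact: parity1. Qed.
Let evenM x y : even x -> even y -> even (gmul x y).
Proof. by rewrite /even parityM => -> ->. Qed.
Let evenV x : even x -> even (ginv x).
Proof. by rewrite /even parityV. Qed.

Definition even_subgrp : grp := subgrp even1 evenM evenV.

Lemma even_subgrp_comm : commutative_grp even_subgrp.
Proof.
by move=> [x ex] [y ey]; apply: sub_val_inj; apply: even_commute.
Qed.

Definition reflection_pow (s : bool) : G := if s then reflection else gone.

Lemma parity_reflection_pow s : parity (reflection_pow s) = s.
Proof. by case: s; rewrite /= ?parity_reflection ?parity1. Qed.

Lemma reflection_pow2 s : gmul (reflection_pow s) (reflection_pow s) = gone.
Proof. by case: s; rewrite /= ?gmul1 // odd_square ?parity_reflection. Qed.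

Lemma even_part_proof (x : G) : even (gmul x (reflection_pow (parity x))).
Proof. by rewrite /even parityM parity_reflection_pow addbb. Qed.

Definition to_sdprod (x : G) : inv_sdprod even_subgrp_comm :=
  (exist _ _ (even_part_proof x), parity x).
Definition of_sdprod (u : inv_sdprod even_subgrp_comm) : G :=
  gmul (proj1_sig u.1) (reflection_pow u.2).

Lemma of_sdprod_hom : hom of_sdprod.
Proof.
have cj a : even a -> gmul reflection a = gmul (ginv a) reflection.
  by apply: odd_conj_even; rewrite parity_reflection.
have r2 : gmul reflection reflection = gone by apply: odd_square; exact: parity_reflection.
move=> [[a pa] s] [[b pb] t]; rewrite /of_sdprod /= /dmul /=.
case: s; case: t => /=; rewrite ?gmulr1 -?gmulA //.
- by rewrite (gmulA reflection) cj // -gmulA r2 gmulr1.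
- by rewrite cj.
Qed.

Lemma to_sdprodK : cancel to_sdprod of_sdprod.
Proof. by move=> x; rewrite /of_sdprod /= -gmulA reflection_pow2 gmulr1. Qed.

Lemma of_sdprodK : cancel of_sdprod to_sdprod.
Proof.
move=> [[a pa] s]; rewrite /to_sdprod.
have e : parity (of_sdprod (exist even a pa, s)) = s.
  by rewrite /of_sdprod /= parityM pa parity_reflection_pow.
apply: injective_projections => /=; last exact: e.
by apply: sub_val_inj => /=; rewrite e /of_sdprod /= -gmulA reflection_pow2 gmulr1.
Qed.

Lemma to_sdprod_hom : hom to_sdprod.
Proof. exact: (can_hom of_sdprod_hom of_sdprodK to_sdprodK). Qed.

Lemma iso_even_sdprod : iso G (inv_sdprod even_subgrp_comm).
Proof.
exists to_sdprod; split; first exact: to_sdprod_hom.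
by exists of_sdprod; split; [exact: to_sdprodK|exact: of_sdprodK].
Qed.

Definition even_gen (i : nat) : even_subgrp := (to_sdprod (S i)).1.

Lemma to_sdprod_gen i : (i < m)%N -> to_sdprod (S i) = (even_gen i, p i).
Proof.
move=> hi; apply: injective_projections => //=.
by rewrite -[S i]/(teval S (tvar i)) parityE.
Qed.

Lemma even_gen_generates : generates m even_gen.
Proof.
move=> x; have [t [bt et]] := genS (proj1_sig x).
have e1 : to_sdprod (proj1_sig x) = (x, false).
  have px : parity (proj1_sig x) = false := proj2_sig x.
  apply: injective_projections => //=; apply: sub_val_inj => /=.
  by rewrite px gmulr1.
have e2 : to_sdprod (teval S t) =
    teval (G := inv_sdprod even_subgrp_comm) (fun i => (even_gen i, p i)) t.
  rewrite -(teval_hom _ _ to_sdprod_hom); apply: teval_ext bt => i hi.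
  exact: to_sdprod_gen.
rewrite et e1 teval_sdprod_zdih (@teval_zdih _ m p) // in e2.
case: e2 => ex _; exists (tcomb (wexp p t) m); split; first exact: tbound_tcomb.
by rewrite (@teval_ab_zmod _ even_subgrp_comm) teval_tcomb ex.
Qed.

(** The even parts of the residual homomorphisms separating the words of depth
    at most [k] give cyclic approximations of [even_subgrp]. *)
Lemma even_cyclic_approx k : exists b (c : nat -> zmod_grp (cyc_zmod b)),
  forall u, tbound m u -> (depth u <= k)%N ->
    (teval c u = gone <-> teval even_gen u = gone).
Proof.
pose L := List.map (fun u => proj1_sig (teval even_gen u)) (words_upto m k).
have [F [hF1 hF2]] := list_nontrivial L.
have [b [phi [hf [hp nf]]]] := dihedral_separation genS approx hF1.
pose c i : zmod_grp (cyc_zmod b) := (phi (proj1_sig (even_gen i))).1.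
exists b, c => u bu du.
have key : (teval c u, false) = phi (proj1_sig (teval even_gen u)).
  transitivity (teval (fun i => ((c i : cyc_zmod b), false) : zdih (cyc_zmod b)) u).
    by rewrite teval_even.
  rewrite teval_val -(teval_hom _ _ hf).
  apply: (@teval_ext (zdih (cyc_zmod b)) m) bu => i hi /=.
  apply: injective_projections => //=; rewrite (par_hom_parity _ (conj hf hp)).
  by symmetry; exact: (proj2_sig (even_gen i)).
split => [e|e]; last by move: key; rewrite e /= (hom1 hf) => -[].
apply: NNPP => ne; apply: (nf (proj1_sig (teval even_gen u))); last first.
  by rewrite -key e.
apply: hF2; first by apply: in_map; exact: words_upto_mono du (words_upto_depth bu).
by move=> e'; apply: ne; apply: sub_val_inj; rewrite e'.
Qed.

Lemma even_subgrp_limit : limit_of cyclic even_subgrp.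
Proof.
exists m, even_gen; split; first exact: even_gen_generates.
pose ap k := cid (even_cyclic_approx k).
pose c k := proj1_sig (cid (proj2_sig (ap k))).
exists (fun k => span_grp m (c k)), (fun k => span_gens m (c k)); split.
  by move=> k; have [g hg] := cyc_zmod_generator (proj1_sig (ap k)); exact: cyclic_span_grp hg.
split; first by move=> k; exact: span_gens_generate.
move=> u bu; exists (depth u) => k hk; rewrite -(proj2_sig (cid (proj2_sig (ap k))) u bu hk).
split => [e|e]; first by rewrite -(teval_span_gens (c k) bu) e.
by apply: sub_val_inj; rewrite teval_span_gens.
Qed.

End Splitting.

Lemma approximable_split (G : grp) : ~ commutative_grp G -> dihedrally_approximable G ->
  exists (A : grp) (hA : commutative_grp A), limit_of cyclic A /\ iso G (inv_sdprod hA).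
Proof.
move=> nab [m [S [p [gS hL]]]].
exists (even_subgrp gS hL), (@even_subgrp_comm _ _ _ _ gS hL).
by split; [exact: even_subgrp_limit|exact: (iso_even_sdprod gS hL nab)].
Qed.

(** * Semidirect products of limits of cyclic groups are limits of dihedral groups *)

Lemma teval_const_comm (C : grp) (g y : C) t : gmul y g = gmul g y ->
  gmul y (teval (fun _ => g) t) = gmul (teval (fun _ => g) t) y.
Proof.
move=> hy; elim: t => /= [i||t1 IH1 t2 IH2|t IH]; first exact: hy.
- by rewrite gmul1 gmulr1.
- by rewrite gmulA IH1 -gmulA IH2 gmulA.
- set a := teval _ t in IH *; apply: (@gcancel _ a).
  by rewrite gmulA -IH -gmulA gmulVr gmulr1 !gmulA gmulVr gmul1.
Qed.

Lemma cyclic_comm (C : grp) : cyclic C -> commutative_grp C.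
Proof.
move=> [g gen] x y.
have hg (z : C) : gmul z g = gmul g z.
  by have [t [_ <-]] := gen z; symmetry; exact: teval_const_comm.
by have [t [_ <-]] := gen y; exact: teval_const_comm.
Qed.

Lemma small_multiple_eq (d y1 y2 : nat) (q : int) : (y1 < d)%N -> (y2 < d)%N ->
  y1%:Z - y2%:Z = q * d%:Z -> y1 = y2.
Proof.
move=> h1 h2 eq.
have [hq|[hq|hq]] : (1 <= q) \/ (q <= -1) \/ q = 0 by lia.
- have : d%:Z <= q * d%:Z by rewrite -{1}(mul1r d%:Z) ler_wpM2r.
  by lia.
- have : q * d%:Z <= - d%:Z by rewrite -mulN1r ler_wpM2r.
  by lia.
- by rewrite hq in eq; lia.
Qed.

Section CyclicZmod.
Variables (Z : zmodType) (g : Z).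
Hypothesis gen : forall x : Z, exists z, x = g *~ z.

Lemma cyclic_iso_int : (forall z, g *~ z = 0 -> z = 0) ->
  iso (zmod_grp Z) (zmod_grp (cyc_zmod None)).
Proof.
move=> tor.
apply: (@bij_hom_iso (zmod_grp Z) (zmod_grp (cyc_zmod None)) (fun z : int => g *~ z)).
- by move=> z w /=; rewrite mulrzDr.
- move=> z w /= e; apply/eqP; rewrite -subr_eq0; apply/eqP/tor.
  by rewrite mulrzBr e subrr.
- by move=> x; have [z ->] := gen x; exists z.
Qed.

Lemma cyclic_iso_ord n : g *~ n.+1%:Z = 0 ->
  (forall z, g *~ z = 0 -> exists q, z = q * n.+1%:Z) ->
  iso (zmod_grp Z) (zmod_grp (cyc_zmod (Some n.+1))).
Proof.
move=> gn tor.
have gmod (a : nat) : g *+ (a %% n.+1) = g *+ a.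
  rewrite {2}(divn_eq a n.+1) mulrnDr mulnC mulrnA.
  by move: gn; rewrite -pmulrn => ->; rewrite mul0rn add0r.
apply: (@bij_hom_iso (zmod_grp Z) (zmod_grp (cyc_zmod (Some n.+1)))
  (fun y : 'I_n.+1 => g *+ y)).
- by move=> y1 y2 /=; rewrite gmod mulrnDr.
- move=> y1 y2 /= e; apply: val_inj.
  have [q eq] : exists q, y1%:Z - y2%:Z = q * n.+1%:Z.
    by apply: tor; rewrite mulrzBr -!pmulrn e subrr.
  exact: small_multiple_eq (ltn_ord y1) (ltn_ord y2) eq.
- move=> x; have [z ->] := gen x.
  have hlt : (`|(z %% n.+1%:Z)%Z| < n.+1)%N.
    by rewrite -ltz_nat gez0_abs ?modz_ge0 ?ltz_pmod.
  exists (Ordinal hlt) => /=.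
  rewrite pmulrn gez0_abs ?modz_ge0 // /modz mulrzBr.
  by rewrite mulrC mulrzA gn mul0rz subr0.
Qed.

Lemma cyclic_zmod_iso : exists b, iso (zmod_grp Z) (zmod_grp (cyc_zmod b)).
Proof.
pose E z := g *~ z = 0.
have hE : zsubgroup E.
  split; first by rewrite /E mulr0z.
  - by move=> a b; rewrite /E mulrzDr => -> ->; rewrite addr0.
  - by move=> a; rewrite /E mulrNz => ->; rewrite oppr0.
have [[|n] [En gn]] := zsubgroup_principal hE.
  by exists None; apply: cyclic_iso_int => z /gn [q]; rewrite mulr0.
by exists (Some n.+1); apply: cyclic_iso_ord.
Qed.
End CyclicZmod.

Lemma teval_const_mulrz (Z : zmodType) (g : Z) t :
  exists z, teval (G := zmod_grp Z) (fun _ => g) t = g *~ z.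
Proof.
elim: t => [i||t1 [z1 e1] t2 [z2 e2]|t [z e]] /=; first by exists 1.
- by exists 0.
- by exists (z1 + z2); rewrite e1 e2 mulrzDr.
- by exists (- z); rewrite e mulrNz.
Qed.

Lemma cyclic_iso (C : grp) : cyclic C -> exists b, iso C (zmod_grp (cyc_zmod b)).
Proof.
move=> hC; have hcomm := cyclic_comm hC; have [g gen] := hC.
have [|b iZ] := @cyclic_zmod_iso (ab_zmod hcomm) g.
  move=> x; have [t [bt <-]] := gen x; rewrite (@teval_ab_zmod _ hcomm).
  exact: teval_const_mulrz.
by exists b; apply: iso_trans iZ; exists id; split => //; exists id.
Qed.

Lemma inv_sdprod_iso (B : grp) (hB : commutative_grp B) (Z : zmodType) :
  iso B (zmod_grp Z) -> iso (inv_sdprod hB) (zdih Z).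
Proof.
move=> [f [hf [g [fg gf]]]].
exists (fun u : inv_sdprod hB => ((f u.1 : Z), u.2) : zdih Z); split.
  move=> [a s] [b t] /=; rewrite /dmul /= hf; case: s => //=.
  by rewrite (homV _ hf).
exists (fun u : zdih Z => (g u.1, u.2) : inv_sdprod hB).
by split=> [[a s]|[a s]] /=; rewrite ?fg ?gf.
Qed.

Lemma dihedral_iso (G H : grp) : iso G H -> dihedral H -> dihedral G.
Proof.
move=> iGH [[n [n1 iH]]|iH]; last by right; exact: iso_trans iH.
by left; exists n; split => //; exact: iso_trans iH.
Qed.

Lemma limit_of_iso (P : grp -> Prop) (G H : grp) : iso G H -> limit_of P H -> limit_of P G.
Proof.
move=> [f [hf [g [fg gf]]]] [m [S [gS [Gs [Ss [PG [gSs cv]]]]]]].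
have hg := can_hom hf fg gf.
exists m, (fun i => g (S i)); split.
  move=> x; have [t [bt et]] := gS (f x); exists t; split => //.
  by rewrite teval_hom // et fg.
exists Gs, Ss; split => //; split => // t bt; have [N hN] := cv t bt.
exists N => k hk; rewrite hN // teval_hom //; split => [|e]; first exact: hom_eq1.
by rewrite -(gf (teval S t)) e hom1.
Qed.

Definition sdprod_marking (B : grp) (hB : commutative_grp B) m (c : nat -> B) :
  nat -> inv_sdprod hB := fun i => if (i < m)%N then (c i, false) else (gone, true).

Lemma teval_sdprod_marking (B : grp) (hB : commutative_grp B) m (c : nat -> B) t :
  tbound m.+1 t -> teval (sdprod_marking hB m c) t =
    (teval c (tcomb (wexp (fun i => (m <= i)%N) t) m), wpar (fun i => (m <= i)%N) t).
Proof.
move=> bt; rewrite teval_sdprod_zdih (@teval_zdih _ m.+1 (fun i => (m <= i)%N)) //; last first.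
  by move=> i hi; rewrite /sdprod_marking; case: ltnP.
congr pair; rewrite (@teval_ab_zmod _ hB) teval_tcomb /zcomb big_ord_recr /=.
rewrite {2}/sdprod_marking ltnn mul0rz addr0; apply: eq_bigr => i _ /=.
by rewrite /sdprod_marking ltn_ord.
Qed.

Lemma sdprod_marking_generates (B : grp) (hB : commutative_grp B) m (c : nat -> B) :
  generates m c -> generates m.+1 (sdprod_marking hB m c).
Proof.
move=> gc [a s]; have [t [bt et]] := gc a.
exists (tmul t (if s then tvar m else tone)); split.
  by split; [exact: (tbound_mono (leqnSn m) bt)|case: s => /=].
have e : teval (sdprod_marking hB m c) t = (a, false).
  rewrite (teval_ext (r' := fun i => (c i, false) : inv_sdprod hB) _ bt); last first.
    by move=> i hi; rewrite /sdprod_marking hi.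
  by rewrite teval_sdprod_zdih teval_even -(@teval_ab_zmod _ hB) et.
rewrite /= e; case: s => /=; last by rewrite /dmul /= gmulr1.
by rewrite /sdprod_marking ltnn /dmul /= gmulr1.
Qed.

Lemma sdprod_limit_dihedral (G : grp) :
  (exists (A : grp) (hA : commutative_grp A), limit_of cyclic A /\ iso G (inv_sdprod hA)) ->
  limit_of dihedral G.
Proof.
move=> [A [hA [[m [T [gT [As [Ts [cAs [gTs cv]]]]]]] iG]]].
apply: (limit_of_iso iG); exists m.+1, (sdprod_marking hA m T); split.
  exact: sdprod_marking_generates.
exists (fun k => inv_sdprod (cyclic_comm (cAs k))).
exists (fun k => sdprod_marking (cyclic_comm (cAs k)) m (Ts k)); split.
  move=> k; have [b ib] := cyclic_iso (cAs k).
  exact: dihedral_iso (inv_sdprod_iso (cyclic_comm (cAs k)) ib) (dihedral_cyc_zmod b).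
split; first by move=> k; apply: sdprod_marking_generates.
move=> t bt; have [N hN] := cv _ (tbound_tcomb (wexp (fun i => (m <= i)%N) t) m).
exists N => k hk; rewrite !teval_sdprod_marking //.
by split => -[/(hN k hk) e ->]; rewrite e.
Qed.

(** * Embedding in an ultraproduct of the [D_2n] *)

Lemma zdih_map_hom (Z Z' : zmodType) (g : Z -> Z') : {morph g : a b / a + b} ->
  hom (fun u : zdih Z => ((g u.1 : Z'), u.2) : zdih Z').
Proof.
move=> gD; have g0 : g 0 = 0 by apply: (@addrI _ (g 0)); rewrite -gD !addr0.
have gN b : g (- b) = - g b by apply/eqP; rewrite -subr_eq0 opprK -gD addNr g0.
by move=> [a s] [b t] /=; rewrite /dmul /= gD; case: s; rewrite //= gN.
Qed.

(** [Z/n] embeds in [Z/nq] by multiplication by [q]. *)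
Lemma ord_dih_embed n q : (0 < q)%N ->
  exists psi : zdih 'I_n.-1.+1 -> D2 (n.-1.+1 * q), hom psi /\ injective psi.
Proof.
move=> q0; pose N := (n.-1.+1 * q)%N.
have Npos : (0 < N)%N by rewrite muln_gt0.
pose g (x : 'I_n.-1.+1) : 'I_N.-1.+1 := inZp (x * q)%N.
have gD : {morph g : a b / a + b}.
  move=> a b; apply: val_inj => /=; rewrite (prednK Npos).
  by rewrite muln_modl -/N modn_mod modnDm mulnDl.
have ginj : injective g.
  move=> a b /(congr1 val) /=; rewrite (prednK Npos) !modn_small ?ltn_pmul2r //.
  by move=> /eqP; rewrite eqn_pmul2r // => /eqP /val_inj.
exists (fun u => (g u.1, u.2)); split; first exact: zdih_map_hom.
move=> [a s] [c t] e; have /= ea := f_equal fst e; have /= es := f_equal snd e.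
by rewrite (ginj _ _ ea) es.
Qed.

(** Reduction mod [N] is injective on elements of absolute value at most [B < N/2]. *)
Lemma int_dih_embed (B N : nat) : (B + B < N)%N ->
  exists psi : zdih int -> D2 N, hom psi /\
    forall x y : zdih int, (`|x.1| <= B)%N -> (`|y.1| <= B)%N -> psi x = psi y -> x = y.
Proof.
move=> BN.
pose g (z : int) : 'I_N.-1.+1 := inZp 1 *~ z.
have gD : {morph g : a b / a + b} by move=> a c; rewrite /g mulrzDr.
have gnat (k : nat) : (k < N)%N -> g k%:Z = 0 -> k = 0%N.
  move=> kN /(congr1 val); rewrite /g -pmulrn Zp_mulrn /= prednK; last by lia.
  by rewrite modnMml mul1n modn_small.
exists (fun u => (g u.1, u.2)); split; first exact: zdih_map_hom.
move=> [a s] [c t] /= ha hc e; have /= e1 := f_equal fst e; have /= -> := f_equal snd e.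
congr pair.
have e0 : g (a - c) = 0 by rewrite gD e1 -gD subrr /g mulr0z.
have hd : (`|a - c| < N)%N by lia.
apply/eqP; rewrite -subr_eq0; apply/eqP.
move: e0 hd; case: (a - c) => k e0 hd; first by rewrite (gnat k hd e0).
have : g (Posz k.+1) = 0.
  by move: e0; rewrite NegzE /g mulrNz => /eqP; rewrite oppr_eq0 => /eqP.
by move=> /(gnat _ hd).
Qed.

Lemma sumn_ge (L : list nat) x : In x L -> (x <= sumn L)%N.
Proof.
elim: L => //= y L IH [<-|/IH h]; first exact: leq_addr.
by apply: leq_trans h _; apply: leq_addl.
Qed.

Lemma dih_embed_large b (X : list (zdih (cyc_zmod b))) M :
  exists N, (M + 3 <= N)%N /\ exists psi : zdih (cyc_zmod b) -> D2 N, hom psi /\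
    forall x y, In x X -> In y X -> psi x = psi y -> x = y.
Proof.
case: b X => [n|] X /=.
  have [|psi [hpsi ipsi]] := @ord_dih_embed n (M + 3); first by rewrite addn3.
  exists (n.-1.+1 * (M + 3))%N; split; first exact: leq_pmull.
  by exists psi; split => // x y _ _; apply: ipsi.
pose B := sumn (List.map (fun u : zdih int => `|u.1|%N) X).
have [|psi [hpsi ipsi]] := @int_dih_embed B (M + 3 + B + B); first by lia.
exists (M + 3 + B + B)%N; split; first by lia.
exists psi; split => // x y hx hy; apply: ipsi; apply: sumn_ge.
  exact: (in_map (fun u : zdih int => `|u.1|%N)).
exact: (in_map (fun u : zdih int => `|u.1|%N)).
Qed.

Lemma bounded_max (Q : nat -> Prop) k : (exists j, (j <= k)%N /\ Q j) ->
  exists j, [/\ (j <= k)%N, Q j & forall j', (j' <= k)%N -> Q j' -> (j' <= j)%N].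
Proof.
elim: k => [|k IH] [j [jk Qj]].
  exists 0%N; move: jk; rewrite leqn0 => /eqP e; subst j.
  by split => // j'; rewrite leqn0 => /eqP ->.
have [Qk|nQk] := pselect (Q k.+1); first by exists k.+1; split.
have jk' : (j <= k)%N by move: jk; rewrite leq_eqVlt => /orP [/eqP e|//]; subst j.
have [j0 [j0k Qj0 mx]] := IH (ex_intro _ j (conj jk' Qj)).
exists j0; split => //; first exact: leq_trans j0k (leqnSn k).
move=> j' hj' Qj'; apply: mx => //.
by move: hj'; rewrite leq_eqVlt => /orP [/eqP e|//]; subst j'.
Qed.

Lemma ultrafilter_refines (F : set_system nat) : ProperFilter F ->
  exists U, ultrafilter U /\ forall A, F A -> U A.
Proof.
move=> FF; have [U [Uu sU]] := ultraFilterLemma FF; exists U; split => //.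
split.
- exact: (@filterT _ U).
- exact: (@filter_not_empty _ U).
- by move=> A B UA AB; exact: (@filterS _ U _ A B AB UA).
- by move=> A B UA UB; exact: (@filterI _ U _ A B UA UB).
- by move=> A; exact: in_ultra_setVsetC.
Qed.

Section UltraEmbedding.
Variables (G : grp) (m : nat) (S : nat -> G).
Hypothesis genS : generates m S.
Hypothesis separation : forall F : list G, (forall x, In x F -> x <> gone) ->
  exists b (phi : G -> zdih (cyc_zmod b)), hom phi /\ forall x, In x F -> phi x <> gone.

Definition ball j := List.map (teval S) (words_upto m j).

Definition injective_on (H : grp) (f : G -> H) (L : list G) :=
  forall x y, In x L -> In y L -> f x = f y -> x = y.

Definition ball_embeds j k :=
  exists psi : G -> D2 (k + 3), hom psi /\ injective_on psi (ball j).

Lemma ball_mono j j' x : (j <= j')%N -> In x (ball j) -> In x (ball j').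
Proof. by move=> jj /in_map_iff [t [<- ht]]; apply: in_map; exact: words_upto_mono jj ht. Qed.

Lemma ball_exhaust x : exists j, In x (ball j).
Proof.
have [t [bt <-]] := genS x; exists (depth t); apply: in_map; exact: words_upto_depth.
Qed.

Lemma ball_embeds_anti j j' k : (j <= j')%N -> ball_embeds j' k -> ball_embeds j k.
Proof.
move=> jj [psi [hp ip]]; exists psi; split => // x y hx hy.
by apply: ip; exact: ball_mono jj _.
Qed.

Lemma ball_embeds_unbounded j M : exists k, (M <= k)%N /\ ball_embeds j k.
Proof.
pose D := List.flat_map (fun x => List.map (fun y => gmul x (ginv y)) (ball j)) (ball j).
have [F [hF1 hF2]] := list_nontrivial D.
have [b [phi [hphi nphi]]] := separation hF1.
have [N [MN [psi [hpsi ipsi]]]] := dih_embed_large (List.map phi (ball j)) M.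
exists (N - 3)%N; split; first by lia.
rewrite /ball_embeds subnK; last by lia.
exists (fun x => psi (phi x)); split; first exact: hom_comp.
move=> x y hx hy e.
have e1 : phi x = phi y by apply: ipsi => //; apply: in_map.
apply: gmulV_eq1; apply: NNPP => ne; apply: (nphi (gmul x (ginv y))).
  apply: hF2 => //; apply/in_flat_map; exists x; split => //.
  exact: (in_map (fun y => gmul x (ginv y))).
by rewrite hphi homV // e1 gmulVr.
Qed.

(** The [k]-th coordinate of the ultraproduct embedding. *)
Lemma best_ball_hom k : exists psi : G -> D2 (k + 3), hom psi /\
  forall j, (j <= k)%N -> ball_embeds j k -> injective_on psi (ball j).
Proof.
have [hex|nex] := pselect (exists j, (j <= k)%N /\ ball_embeds j k).
  have [j0 [j0k [psi [hp ip]] mx]] := bounded_max hex.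
  exists psi; split => // j jk ej x y hx hy.
  by apply: ip; exact: ball_mono (mx j jk ej) _.
exists (fun _ => gone); split; first by move=> x y; rewrite gmul1.
by move=> j jk ej; exfalso; apply: nex; exists j.
Qed.

Definition ultra_coord (x : G) (k : nat) : D2 (k + 3) := proj1_sig (cid (best_ball_hom k)) x.

Lemma ultra_embed : exists U, ultrafilter U /\ embeds_in_dih_ultraproduct G U.
Proof.
pose T j : set nat := fun k => (j <= k)%N /\ ball_embeds j k.
have FF : ProperFilter (filter_from setT T).
  apply: filter_from_proper; last first.
    by move=> i _; have [k [ik Ek]] := ball_embeds_unbounded i i; exists k.
  apply: filter_fromT_filter; first by exists 0%N.
  move=> i j; exists (maxn i j) => k [lk El]; split; split.
  - exact: leq_trans (leq_maxl i j) lk.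
  - exact: ball_embeds_anti (leq_maxl i j) El.
  - exact: leq_trans (leq_maxr i j) lk.
  - exact: ball_embeds_anti (leq_maxr i j) El.
have [U [hU sU]] := ultrafilter_refines FF.
have [UT _ US UI _] := hU.
exists U; split => //; exists ultra_coord; split.
  move=> x y; apply: US UT _ => k _.
  by rewrite /ultra_coord; case: (proj2_sig (cid (best_ball_hom k))) => hp _; rewrite hp.
move=> x y Ue; have [jx hx] := ball_exhaust x; have [jy hy] := ball_exhaust y.
pose j := maxn jx jy.
have hx' : In x (ball j) by apply: ball_mono hx; apply: leq_maxl.
have hy' : In y (ball j) by apply: ball_mono hy; apply: leq_maxr.
have UTj : U (T j) by apply: sU; exists j.
apply: NNPP => nxy; case: hU => _ UF _ _ _; apply: UF.
apply: US (UI _ _ UTj Ue) _ => k [[jk Ejk] e]; apply: nxy.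
exact: (proj2 (proj2_sig (cid (best_ball_hom k))) j jk Ejk x y hx' hy' e).
Qed.
End UltraEmbedding.

Section Los.
Variables (G : grp) (U : (nat -> Prop) -> Prop) (hU : ultrafilter U).
Variables (Gs : nat -> grp) (f : G -> forall k : nat, Gs k).
Hypothesis fhom : forall x y : G, U (fun k => f (gmul x y) k = gmul (f x k) (f y k)).
Hypothesis finj : forall x y : G, U (fun k => f x k = f y k) -> x = y.

Let UT : U (fun _ => True). Proof. by case: hU. Qed.
Let UF : ~ U (fun _ => False). Proof. by case: hU. Qed.
Let US A B : U A -> (forall n, A n -> B n) -> U B. Proof. by case: hU => _ _ h _ _; apply: h. Qed.
Let UI A B : U A -> U B -> U (fun n => A n /\ B n). Proof. by case: hU => _ _ _ h _; apply: h. Qed.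
Let UC A : U A \/ U (fun n => ~ A n). Proof. by case: hU => _ _ _ _ h; apply: h. Qed.

Lemma ultra_teval (r : nat -> G) t :
  U (fun k => f (teval r t) k = teval (fun i => f (r i) k) t).
Proof.
have f1 : U (fun k => f gone k = gone).
  by apply: US (fhom gone gone) _ => k; rewrite gmul1 => e; apply: gidem; rewrite -e.
elim: t => [i|||t IH] /=; first exact: US UT _.
- exact: f1.
- move=> t1 IH1 t2 IH2; apply: US (UI (fhom (teval r t1) (teval r t2)) (UI IH1 IH2)) _.
  by move=> k [-> [-> ->]].
- apply: US (UI (fhom (ginv (teval r t)) (teval r t)) (UI f1 IH)) _.
  move=> k [e [e1 e2]]; rewrite gmulV e1 in e; rewrite -e2.
  by apply: (@gmulV_eq1 _ _ (ginv (f (teval r t) k))); rewrite ginvK -e.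
Qed.

Lemma ultra_qsat (r : nat -> G) phi :
  qsat r phi <-> U (fun k => qsat (fun i => f (r i) k) phi).
Proof.
elim: phi => [t1 t2|p1 IH1 p2 IH2|p1 IH1 p2 IH2|p IH] /=.
- split => [e|h].
    by apply: US (UI (ultra_teval r t1) (ultra_teval r t2)) _ => k [<- <-]; rewrite e.
  apply: finj; apply: US (UI h (UI (ultra_teval r t1) (ultra_teval r t2))) _.
  by move=> k [e [-> ->]].
- split => [[/IH1 h1 /IH2 h2]|h]; first exact: UI.
  by split; [apply/IH1; apply: US h _ => k []|apply/IH2; apply: US h _ => k []].
- split => [[/IH1 h|/IH2 h]|h]; first by apply: US h _ => k; left.
    by apply: US h _ => k; right.
  case: (UC (fun k => qsat (fun i => f (r i) k) p1)) => [/IH1|h1]; first by left.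
  by right; apply/IH2; apply: US (UI h h1) _ => k [[]].
- split => [np|h np].
    by case: (UC (fun k => qsat (fun i => f (r i) k) p)) => // /IH.
  by apply: UF; apply: US (UI h (proj1 IH np)) _ => k [].
Qed.
End Los.

Lemma ultraproduct_univ_theory (G : grp) U : ultrafilter U ->
  embeds_in_dih_ultraproduct G U ->
  forall phi : qf, (forall n : nat, (3 <= n)%N -> univ_holds (D2 n) phi) ->
    univ_holds G phi.
Proof.
move=> hU [f [fhom finj]] phi hphi r.
apply/(@ultra_qsat _ _ hU (fun k => D2 (k + 3)) f fhom finj).
by case: hU => UT _ US _ _; apply: US UT _ => k _; apply: hphi; rewrite addn3.
Qed.

Lemma approximable_of_limit (G : grp) : limit_of dihedral G -> dihedrally_approximable G.
Proof.
by move=> /limit_dihedral_approx [m [S [gS hL]]]; exact: approximable_of_dihedral_approx gS hL.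
Qed.

Lemma approximable_of_residually (G : grp) : fin_gen G ->
  fully_residually dihedral G -> dihedrally_approximable G.
Proof.
move=> [m [S gS]] hr; apply: approximable_of_dihedral_approx gS _.
exact: residually_dihedral_approx.
Qed.

Lemma approximable_of_univ_theory (G : grp) : fin_gen G ->
  (forall phi : qf, (forall n : nat, (3 <= n)%N -> univ_holds (D2 n) phi) ->
       univ_holds G phi) -> dihedrally_approximable G.
Proof.
move=> [m [S gS]] hTh; apply: approximable_of_dihedral_approx gS _.
exact: univ_theory_dihedral_approx.
Qed.

Lemma approximable_ultraproduct (G : grp) : dihedrally_approximable G ->
  exists U, ultrafilter U /\ embeds_in_dih_ultraproduct G U.
Proof.
move=> [m [S [p [gS hL]]]]; apply: (ultra_embed gS) => F hF.
by have [b [phi [hphi [_ nz]]]] := dihedral_separation gS hL hF; exists b, phi.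
Qed.

Theorem theorem4p1 (G : grp) :
  fin_gen G ->
  ~ commutative_grp G ->
  (limit_of dihedral G <-> fully_residually dihedral G) /\
  (limit_of dihedral G <->
     exists (A : grp) (hA : commutative_grp A),
       limit_of cyclic A /\ iso G (inv_sdprod hA)) /\
  (limit_of dihedral G <->
     forall phi : qf,
       (forall n : nat, (3 <= n)%N -> univ_holds (D2 n) phi) ->
       univ_holds G phi) /\
  (limit_of dihedral G <->
     exists U : (nat -> Prop) -> Prop,
       ultrafilter U /\ embeds_in_dih_ultraproduct G U).
Proof.
move=> fg nab.
have approx_limit : dihedrally_approximable G -> limit_of dihedral G.
  by move=> /(approximable_split nab); exact: sdprod_limit_dihedral.
have ultra_univ : (exists U, ultrafilter U /\ embeds_in_dih_ultraproduct G U) ->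
    forall phi : qf, (forall n : nat, (3 <= n)%N -> univ_holds (D2 n) phi) ->
      univ_holds G phi.
  by move=> [U [hU he]]; exact: ultraproduct_univ_theory hU he.
split; [|split; [|split]]; split.
- by move=> /approximable_of_limit; exact: approximable_residually.
- by move=> /(approximable_of_residually fg); exact: approx_limit.
- by move=> /approximable_of_limit; exact: approximable_split.
- exact: sdprod_limit_dihedral.
- by move=> /approximable_of_limit /approximable_ultraproduct; exact: ultra_univ.
- by move=> /(approximable_of_univ_theory fg); exact: approx_limit.
- by move=> /approximable_of_limit; exact: approximable_ultraproduct.
- by move=> /ultra_univ /(approximable_of_univ_theory fg); exact: approx_limit.
Qed.
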